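(* Let $V$ be a real bounded sequence with $V_n\ge C$ for all $n\ge1$, for some $C>0$, and $n(V_{n+1}-V_n)\in\ell^1$. Let $b_n=V_n+2$, $S_n=\frac12\big(V_n+2+\sqrt{V_n(V_n+4)}\big)$, and let $z_n$, $C_z$, $\phi^\pm$, $\widetilde V$ be as defined below. Then: (a) $S_{n+1}-S_n\in\ell^1$; (b) $V_n$ converges to a nonzero limit $V_\infty$, and the infinite product defining $C_z$ converges to a finite nonzero number, so $C_z$ is well defined; (c) $z_nz_{n+1}=1/\sqrt{V_{n+1}(V_{n+1}+4)}$ and $z_m-[V_\infty(V_\infty+4)]^{-1/4}\in\ell^1$ (as a sequence in $m$); (d) $\lim_{n\to\infty}\widetilde V_n=V_\infty$, and the Green matrix $G_{mn}=\phi^+_{\min(m,n)}\phi^-_{\max(m,n)}$ of $-\Delta+\widetilde V$ and the product $\phi^+_n\phi^-_n$ are uniformly bounded; (e) $\widetilde V_n-V_n\in\ell^1$, and consequently (taking $\widetilde V$ as comparison potential) $(-\Delta+V)\psi=0$ has a solution $\psi^-$ with $\psi^-_n=\phi^-_n+r_n\max_{k\ge n}|\phi^-_k|$, where $r_n\to0$.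
   Context: $(\Delta f)_n=f_{n+1}+f_{n-1}-2f_n$; $(-\Delta+V)\psi=0$ means $-\psi_{n+1}-\psi_{n-1}+(2+V_n)\psi_n=0$. Note $b_n^2-4=V_n(V_n+4)$. Define $C_z:=\big(V_\infty(V_\infty+4)\big)^{-1/4}\prod_{m=1}^\infty\sqrt{\frac{V_{2m}(V_{2m}+4)}{V_{2m-1}(V_{2m-1}+4)}}$ and, for $n\ge1$, $z_n:=C_z^{(-1)^n}\Big(\frac{\prod_{1\le k\le n-1,\,k\equiv n-1\ (\mathrm{mod}\ 2)}(b_k^2-4)}{\prod_{1\le k\le n,\,k\equiv n\ (\mathrm{mod}\ 2)}(b_k^2-4)}\Big)^{1/2}$ (the factor alternates between $C_z$ and $C_z^{-1}$). Set $\phi^\pm_n=z_n\prod_{\ell=1}^nS_\ell^{\pm1}$ and $\widetilde V_n=\frac{z_{n+1}}{z_n}S_{n+1}+\frac{z_{n-1}}{z_nS_n}-2$ (so that $(-\Delta+\widetilde V)\phi^\pm=0$). *)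

From Stdlib Require Import Reals Lra.
From Coquelicot Require Import Coquelicot.
Open Scope R_scope.

(* Sequences are indexed by nat; index n corresponds to the paper's n (>= 1).
   The value at index 0 is never used by the definitions below except where noted. *)

Fixpoint prodR (f : nat -> R) (n : nat) : R :=
  match n with
  | O => 1
  | S k => prodR f k * f (S k)
  end.

(* prodPar f n = product of f k over 1 <= k <= n with k = n (mod 2) *)
Definition prodPar (f : nat -> R) (n : nat) : R :=
  prodR (fun k => if Bool.eqb (Nat.even k) (Nat.even n) then f k else 1) n.

Definition bseq (V : nat -> R) (n : nat) : R := V n + 2.

Definition Sseq (V : nat -> R) (n : nat) : R :=
  (V n + 2 + sqrt (V n * (V n + 4))) / 2.

(* V_infinity := lim V_n (as a real; part (b) asserts the limit exists). *)
Definition Vinf (V : nat -> R) : R := real (Lim_seq V).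

Definition Cz_partial (V : nat -> R) (N : nat) : R :=
  prodR (fun m => sqrt ((V (2 * m)%nat * (V (2 * m)%nat + 4)) /
                        (V (2 * m - 1)%nat * (V (2 * m - 1)%nat + 4)))) N.

Definition Cz (V : nat -> R) : R :=
  Rpower (Vinf V * (Vinf V + 4)) (- (1 / 4)) * real (Lim_seq (Cz_partial V)).

(* z_n = C_z^{(-1)^n} ( prod_{1<=k<=n-1, k = n-1 mod 2} (b_k^2-4)
                        / prod_{1<=k<=n, k = n mod 2} (b_k^2-4) )^{1/2}.
   (Used for n >= 1; at n = 0 the same formula gives z_0 = C_z.) *)
Definition zseq (V : nat -> R) (n : nat) : R :=
  (if Nat.even n then Cz V else / Cz V) *
  sqrt (prodPar (fun k => bseq V k ^ 2 - 4) (n - 1)%nat /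
        prodPar (fun k => bseq V k ^ 2 - 4) n).

Definition phiP (V : nat -> R) (n : nat) : R := zseq V n * prodR (Sseq V) n.
Definition phiM (V : nat -> R) (n : nat) : R :=
  zseq V n * prodR (fun l => / Sseq V l) n.

Definition Vtilde (V : nat -> R) (n : nat) : R :=
  zseq V (n + 1) / zseq V n * Sseq V (n + 1)
  + zseq V (n - 1)%nat / (zseq V n * Sseq V n) - 2.

Definition maxtail (f : nat -> R) (n : nat) : R :=
  real (Sup_seq (fun k => Rabs (f (n + k)%nat))).

From Stdlib Require Import Reals Lra Lia.
From Coquelicot Require Import Coquelicot.
Open Scope R_scope.

(* Since |V_n - V_inf| <= sum_{k >= n} |V_{k+1} - V_k|, the hypothesis n (V_{n+1} - V_n) in l^1
   gives V - V_inf in l^1, and this "l^1-convergence" is stable under sums, products, inverses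
   bounded away from 0 and square roots; (a), the limits in (d) and the first half of (e) follow.
   The logarithms of the partial products of C_z have increments with the same weighted
   summability, so the product converges to a positive limit (b); splitting z_n by parity
   expresses it through these partial products (c).  Since S_n >= 1, the Green matrix is bounded
   by sup |z|^2.  For the solution psi^-, take the growing solution u (u_0 = u_1 = 1) and the
   recessive one w_n = u_n sum_{j >= n} 1 / (u_j u_{j+1}).  The ratios u_{n+1} / u_n follow the
   Riccati map r -> V + 2 - 1/r, which contracts near S, so they converge to S_inf in l^1; hence
   u_n phi^-_n and u_n w_n converge to positive limits, and a multiple of w is asymptotic to
   phi^-. *)

Fixpoint psum (u : nat -> R) (N : nat) : R :=
  match N with O => 0 | S k => psum u k + u k end.

Definition summable (u : nat -> R) : Prop :=
  exists B, forall N, psum (fun n => Rabs (u n)) N <= B.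

Lemma psum_nonneg u N : (forall n, 0 <= u n) -> 0 <= psum u N.
Proof. intros H; induction N; simpl; [lra|]. specialize (H N). lra. Qed.

Lemma psum_le u v N : (forall n, u n <= v n) -> psum u N <= psum v N.
Proof. intros H; induction N; simpl; [lra|]. specialize (H N). lra. Qed.

Lemma psum_le_psum u N M : (forall n, 0 <= u n) -> (N <= M)%nat -> psum u N <= psum u M.
Proof. intros H HNM; induction HNM; [lra|]. simpl. specialize (H m). lra. Qed.

Lemma psum_plus u v N : psum (fun n => u n + v n) N = psum u N + psum v N.
Proof. induction N; simpl; lra. Qed.

Lemma psum_scal c u N : psum (fun n => c * u n) N = c * psum u N.
Proof. induction N as [|N IH]; simpl; [ring|]. rewrite IH; ring. Qed.

Lemma Rabs_psum_le u N : Rabs (psum u N) <= psum (fun n => Rabs (u n)) N.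
Proof.
  induction N; simpl. rewrite Rabs_R0; lra.
  eapply Rle_trans. apply Rabs_triang. lra.
Qed.

Lemma psum_Sl u N : psum u (S N) = u O + psum (fun n => u (S n)) N.
Proof. induction N as [|N IH]; simpl in *; [lra|]. rewrite IH. lra. Qed.

Lemma psum_telescope s N : psum (fun k => s (S k) - s k) N = s N - s O.
Proof. induction N as [|N IH]; simpl; [lra|]. rewrite IH; lra. Qed.

Lemma psum_sum_n u N : psum u (S N) = sum_n u N.
Proof.
  induction N as [|N IH]. simpl. rewrite sum_O. lra.
  rewrite sum_Sn. change (psum u (S N) + u (S N) = plus (sum_n u N) (u (S N))).
  rewrite IH. reflexivity.
Qed.

Lemma psum_even_odd u N :
  psum u (2 * N) = psum (fun n => u (2 * n)%nat) N + psum (fun n => u (2 * n + 1)%nat) N.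
Proof.
  induction N as [|N IH]. simpl; lra.
  replace (2 * S N)%nat with (S (S (2 * N))) by lia.
  change (psum u (S (S (2 * N)))) with (psum u (2 * N) + u (2 * N)%nat + u (S (2 * N))).
  rewrite IH. cbn [psum]. replace (S (2 * N)) with (2 * N + 1)%nat by lia. lra.
Qed.

Lemma is_lim_seq_psum (f : nat -> nat -> R) (g : nat -> R) m :
  (forall N, is_lim_seq (fun K => f K N) (g N)) ->
  is_lim_seq (fun K => psum (f K) m) (psum g m).
Proof.
  intro H. induction m; simpl. apply is_lim_seq_const.
  apply is_lim_seq_plus'; auto.
Qed.

Lemma summable_ex_series u : summable u -> ex_series (fun n => Rabs (u n)).
Proof.
  intros [B HB].
  assert (Hg : Un_growing (sum_n (fun n => Rabs (u n)))).
  { intro n. rewrite <- !psum_sum_n. simpl. pose proof (Rabs_pos (u (S n))). simpl in *. lra. }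
  assert (Hb : has_ub (sum_n (fun n => Rabs (u n)))).
  { exists B. intros x [n ->]. rewrite <- psum_sum_n. apply HB. }
  destruct (growing_cv _ Hg Hb) as [l Hl].
  exists l. apply is_lim_seq_Reals in Hl. exact Hl.
Qed.

Lemma ex_series_summable u : ex_series (fun n => Rabs (u n)) -> summable u.
Proof.
  intros [l Hl]. exists l. intro N.
  assert (Hl' : is_lim_seq (sum_n (fun n => Rabs (u n))) l) by exact Hl.
  apply (is_lim_seq_le (fun _ => psum (fun n => Rabs (u n)) N)
       (fun k => sum_n (fun n => Rabs (u n)) (N + k)) (psum (fun n => Rabs (u n)) N) l).
  - intro k. rewrite <- psum_sum_n. apply psum_le_psum. intro; apply Rabs_pos. lia.
  - apply is_lim_seq_const.
  - rewrite (is_lim_seq_incr_n _ N) in Hl'.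
    eapply is_lim_seq_ext; [|exact Hl']. intro k; simpl. f_equal; lia.
Qed.

Lemma summable_le u v K : (forall n, Rabs (u n) <= K * Rabs (v n)) -> summable v -> summable u.
Proof.
  intros H [B HB]. exists (Rmax K 0 * B). intro N.
  eapply Rle_trans. apply psum_le. intro n. apply (Rle_trans _ _ _ (H n)).
  apply Rmult_le_compat_r. apply Rabs_pos. apply Rmax_l.
  rewrite (psum_scal (Rmax K 0) (fun n => Rabs (v n))).
  apply Rmult_le_compat_l. apply Rmax_r. apply HB.
Qed.

Lemma summable_ext u v : (forall n, u n = v n) -> summable u -> summable v.
Proof. intros H; apply summable_le with 1. intro; rewrite H; lra. Qed.

Lemma summable_plus u v : summable u -> summable v -> summable (fun n => u n + v n).
Proof.
  intros [B1 H1] [B2 H2]. exists (B1 + B2). intro N.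
  eapply Rle_trans. apply psum_le. intro; apply Rabs_triang.
  rewrite (psum_plus (fun n => Rabs (u n)) (fun n => Rabs (v n))).
  specialize (H1 N); specialize (H2 N); lra.
Qed.

Lemma summable_minus u v : summable u -> summable v -> summable (fun n => u n - v n).
Proof.
  intros Hu Hv. apply summable_plus; auto.
  apply (summable_le (fun n => - v n) v 1); auto. intro; rewrite Rabs_Ropp; lra.
Qed.

Lemma summable_S u : summable (fun n => u (S n)) <-> summable u.
Proof.
  split; intros [B HB].
  - exists (Rabs (u O) + B). intros [|N].
    + pose proof (Rabs_pos (u O)). pose proof (HB O); simpl in *; lra.
    + rewrite psum_Sl. specialize (HB N). lra.
  - exists B. intro N. specialize (HB (S N)). rewrite psum_Sl in HB.
    pose proof (Rabs_pos (u O)). lra.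
Qed.

Lemma summable_even u : summable u -> summable (fun n => u (2 * n)%nat).
Proof.
  intros [B HB]. exists B. intro N. eapply Rle_trans; [|apply (HB (2 * N)%nat)].
  rewrite (psum_even_odd (fun n => Rabs (u n))).
  pose proof (psum_nonneg (fun n => Rabs (u (2 * n + 1)%nat)) N (fun _ => Rabs_pos _)). lra.
Qed.

Lemma summable_odd u : summable u -> summable (fun n => u (2 * n + 1)%nat).
Proof.
  intros [B HB]. exists B. intro N. eapply Rle_trans; [|apply (HB (2 * N)%nat)].
  rewrite (psum_even_odd (fun n => Rabs (u n))).
  pose proof (psum_nonneg (fun n => Rabs (u (2 * n)%nat)) N (fun _ => Rabs_pos _)). lra.
Qed.

Lemma summable_even_odd u :
  summable (fun n => u (2 * n)%nat) -> summable (fun n => u (2 * n + 1)%nat) -> summable u.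
Proof.
  intros [B1 H1] [B2 H2]. exists (B1 + B2). intro N.
  apply Rle_trans with (psum (fun n => Rabs (u n)) (2 * N)).
  - apply psum_le_psum. intro; apply Rabs_pos. lia.
  - rewrite (psum_even_odd (fun n => Rabs (u n))). specialize (H1 N); specialize (H2 N). lra.
Qed.

Lemma summable_bounded u : summable u -> exists B, forall n, Rabs (u n) <= B.
Proof.
  intros [B HB]. exists B. intro n. eapply Rle_trans; [|apply (HB (S n))]. simpl.
  pose proof (psum_nonneg (fun n => Rabs (u n)) n (fun _ => Rabs_pos _)). lra.
Qed.

Lemma summable_lim_0 u : summable u -> is_lim_seq u 0.
Proof.
  intro H. apply summable_ex_series, ex_series_lim_0 in H.
  apply is_lim_seq_abs_0. exact H.
Qed.

Lemma summable_psum_cvg u : summable u -> exists l : R, is_lim_seq (psum u) l.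
Proof.
  intro H. apply summable_ex_series, ex_series_Rabs in H. destruct H as [l Hl].
  exists l. apply is_lim_seq_incr_1. eapply is_lim_seq_ext; [|exact Hl].
  intro n. simpl. rewrite <- psum_sum_n. reflexivity.
Qed.

Lemma summable_contraction (e a : nat -> R) (q : R) :
  0 <= q < 1 -> summable a -> (forall n, Rabs (e (S n)) <= q * (Rabs (e n) + Rabs (a n))) ->
  summable e.
Proof.
  intros Hq [B HB] Hrec. pose proof (Rabs_pos (e O)).
  assert (HB0 : 0 <= B) by (pose proof (HB O); simpl in *; lra).
  exists ((Rabs (e O) + q * B) / (1 - q)). intro N.
  set (E := psum (fun n => Rabs (e n))).
  assert (Htail : psum (fun n => Rabs (e (S n))) N <= q * (E N + B)).
  { apply Rle_trans with (psum (fun n => q * (Rabs (e n) + Rabs (a n))) N).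
    - apply psum_le. intro; apply Hrec.
    - rewrite psum_scal, psum_plus. specialize (HB N). unfold E. apply Rmult_le_compat_l; lra. }
  assert (HE : E N <= E (S N)) by (unfold E; simpl; pose proof (Rabs_pos (e N)); lra).
  apply Rle_trans with (E (S N)); [exact HE|].
  unfold E in *; rewrite psum_Sl in *.
  apply Rmult_le_reg_r with (1 - q); [lra|].
  unfold Rdiv. rewrite Rmult_assoc, Rinv_l by lra. nra.
Qed.

Definition l1_cvg (u : nat -> R) (l : R) := summable (fun n => u n - l).

Lemma l1_cvg_ext u v l l' : (forall n, u n = v n) -> l = l' -> l1_cvg u l -> l1_cvg v l'.
Proof. intros H <-. apply summable_ext. intro n; rewrite H; ring. Qed.

Lemma l1_cvg_bounded u l : l1_cvg u l -> exists B, forall n, Rabs (u n) <= B.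
Proof.
  intro H. destruct (summable_bounded _ H) as [B HB]. exists (B + Rabs l). intro n.
  specialize (HB n). replace (u n) with ((u n - l) + l) by ring.
  eapply Rle_trans. apply Rabs_triang. lra.
Qed.

Lemma l1_cvg_lim u l : l1_cvg u l -> is_lim_seq u l.
Proof.
  intro H. apply summable_lim_0 in H.
  apply is_lim_seq_plus' with (v := fun _ => l) (l2 := l) in H; [|apply is_lim_seq_const].
  rewrite Rplus_0_l in H. eapply is_lim_seq_ext; [|exact H]. intro; simpl; lra.
Qed.

Lemma l1_cvg_S u l : l1_cvg (fun n => u (S n)) l <-> l1_cvg u l.
Proof. apply (summable_S (fun n => u n - l)). Qed.

Lemma l1_cvg_const l : l1_cvg (fun _ => l) l.
Proof.
  exists 0. intro N. right. induction N as [|N IH]; simpl; [lra|].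
  rewrite IH. unfold Rminus; rewrite Rplus_opp_r, Rabs_R0; ring.
Qed.

Lemma l1_cvg_plus u v l m : l1_cvg u l -> l1_cvg v m -> l1_cvg (fun n => u n + v n) (l + m).
Proof.
  intros H1 H2. eapply summable_ext; [|apply (summable_plus _ _ H1 H2)]. intro; simpl; ring.
Qed.

Lemma l1_cvg_minus u v l m : l1_cvg u l -> l1_cvg v m -> l1_cvg (fun n => u n - v n) (l - m).
Proof.
  intros H1 H2. eapply summable_ext; [|apply (summable_minus _ _ H1 H2)]. intro; simpl; ring.
Qed.

Lemma l1_cvg_mult u v l m : l1_cvg u l -> l1_cvg v m -> l1_cvg (fun n => u n * v n) (l * m).
Proof.
  intros H1 H2. destruct (l1_cvg_bounded _ _ H1) as [B HB].
  apply summable_ext with (fun n => u n * (v n - m) + m * (u n - l)); [intro; ring|].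
  apply summable_plus.
  - apply (summable_le (fun n => u n * (v n - m)) (fun n => v n - m) B); [|exact H2]. intro n. rewrite Rabs_mult.
    apply Rmult_le_compat_r; auto. apply Rabs_pos.
  - apply (summable_le (fun n => m * (u n - l)) (fun n => u n - l) (Rabs m)); [|exact H1]. intro n. rewrite Rabs_mult. lra.
Qed.

Lemma l1_cvg_scal c u l : l1_cvg u l -> l1_cvg (fun n => c * u n) (c * l).
Proof. intro H. apply l1_cvg_mult; auto. apply l1_cvg_const. Qed.

Lemma l1_cvg_inv u l m : l1_cvg u l -> 0 < m -> (forall n, m <= Rabs (u n)) -> l <> 0 ->
  l1_cvg (fun n => / u n) (/ l).
Proof.
  intros H Hm Hu Hl. apply (summable_le (fun n => / u n - / l) (fun n => u n - l) (/ (m * Rabs l))); [|exact H].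
  intro n.
  assert (Hun : u n <> 0) by (intro E; specialize (Hu n); rewrite E, Rabs_R0 in Hu; lra).
  replace (/ u n - / l) with (- (u n - l) / (u n * l)) by (field; auto).
  unfold Rdiv. rewrite Rabs_mult, Rabs_Ropp, Rabs_inv, Rabs_mult, Rmult_comm
    by (apply Rmult_integral_contrapositive; auto).
  apply Rmult_le_compat_r; [apply Rabs_pos|].
  apply Rinv_le_contravar; [apply Rmult_lt_0_compat; auto; apply Rabs_pos_lt; auto|].
  apply Rmult_le_compat_r; [apply Rabs_pos|apply Hu].
Qed.

Lemma Rabs_sqrt_sub_le x y : 0 <= x -> 0 < y -> Rabs (sqrt x - sqrt y) <= / sqrt y * Rabs (x - y).
Proof.
  intros Hx Hy. pose proof (sqrt_lt_R0 y Hy). pose proof (sqrt_pos x).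
  assert (E : sqrt x - sqrt y = (x - y) / (sqrt x + sqrt y)).
  { field_simplify_eq; [|lra].
    rewrite <- (sqrt_sqrt x Hx) at 2. rewrite <- (sqrt_sqrt y) at 2 by lra. ring. }
  rewrite E. unfold Rdiv. rewrite Rabs_mult, Rmult_comm. apply Rmult_le_compat_r; [apply Rabs_pos|].
  rewrite Rabs_inv, Rabs_pos_eq by lra. apply Rinv_le_contravar; lra.
Qed.

Lemma l1_cvg_sqrt u l : l1_cvg u l -> (forall n, 0 <= u n) -> 0 < l ->
  l1_cvg (fun n => sqrt (u n)) (sqrt l).
Proof.
  intros H Hu Hl. apply (summable_le (fun n => sqrt (u n) - sqrt l) (fun n => u n - l) (/ sqrt l)); [|exact H].
  intro n. apply Rabs_sqrt_sub_le; auto.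
Qed.

Lemma psum_dist_le_weighted_increments s K m : (m <= K)%nat ->
  psum (fun N => Rabs (s (S N) - s K)) m <= psum (fun k => Rabs (INR k * (s (S k) - s k))) K.
Proof.
  revert m. induction K as [|K IH]; intros m Hm.
  { replace m with O by lia. simpl. lra. }
  assert (Hstep : forall m, psum (fun N => Rabs (s (S N) - s (S K))) m <=
      psum (fun N => Rabs (s (S N) - s K)) m + INR m * Rabs (s (S K) - s K)).
  { intro j; induction j as [|j IHj]; cbn [psum]; [simpl; lra|]. rewrite S_INR.
    assert (Rabs (s (S j) - s (S K)) <= Rabs (s (S j) - s K) + Rabs (s (S K) - s K)).
    { replace (s (S j) - s (S K)) with ((s (S j) - s K) - (s (S K) - s K)) by ring.
      eapply Rle_trans. apply Rabs_triang. rewrite Rabs_Ropp. lra. }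
    lra. }
  simpl psum at 2.
  rewrite Rabs_mult, (Rabs_pos_eq (INR K)) by apply pos_INR.
  pose proof (Rabs_pos (s (S K) - s K)).
  destruct (Compare_dec.le_lt_dec m K) as [h|h].
  - eapply Rle_trans. apply Hstep. specialize (IH m h).
    assert (INR m <= INR K) by (apply le_INR; auto). nra.
  - replace m with (S K) by lia. simpl psum at 1.
    replace (s (S K) - s (S K)) with 0 by ring. rewrite Rabs_R0.
    pose proof (Hstep K). specialize (IH K (le_n K)). lra.
Qed.

Lemma summable_increments s :
  summable (fun k => INR k * (s (S k) - s k)) -> summable (fun k => s (S k) - s k).
Proof.
  intro Hs. apply summable_S.
  apply (summable_le (fun k => s (S (S k)) - s (S k)) (fun k => INR (S k) * (s (S (S k)) - s (S k))) 1);
    [|exact (proj2 (summable_S _) Hs)].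
  intro n. rewrite Rabs_mult, (Rabs_pos_eq (INR (S n))) by apply pos_INR.
  rewrite S_INR. pose proof (pos_INR n). pose proof (Rabs_pos (s (S (S n)) - s (S n))). nra.
Qed.

(* |s_n - l| <= sum_{k >= n} |s_{k+1} - s_k|, and summing over n weighs each increment by
   k + 1. *)
Lemma l1_cvg_of_weighted_increments s :
  summable (fun k => INR k * (s (S k) - s k)) -> exists l, l1_cvg s l.
Proof.
  intro Hs. destruct (summable_psum_cvg _ (summable_increments _ Hs)) as [l0 Hl0].
  set (l := s O + l0).
  assert (Hl : is_lim_seq s l).
  { apply is_lim_seq_ext with (u := fun N => s O + psum (fun k => s (S k) - s k) N).
    - intro N. rewrite psum_telescope. ring.
    - apply is_lim_seq_plus'; auto. apply is_lim_seq_const. }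
  exists l. apply summable_S. destruct Hs as [B HB]. exists B. intro m.
  set (g := fun K => psum (fun N => Rabs (s (S N) - s (K + m)%nat)) m).
  assert (Hg : is_lim_seq g (psum (fun N => Rabs (s (S N) - l)) m)).
  { apply (is_lim_seq_psum (fun K N => Rabs (s (S N) - s (K + m)%nat))).
    intro N. apply (is_lim_seq_abs _ (Finite (s (S N) - l))).
    apply is_lim_seq_minus'; [apply is_lim_seq_const|].
    exact (proj1 (is_lim_seq_incr_n s m l) Hl). }
  refine (is_lim_seq_le g (fun _ => B) _ B _ Hg (is_lim_seq_const B)).
  intro K. eapply Rle_trans. apply psum_dist_le_weighted_increments. lia. apply HB.
Qed.

Lemma Rabs_ln_sub_le x y m : 0 < m -> m <= x -> m <= y -> Rabs (ln x - ln y) <= / m * Rabs (x - y).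
Proof.
  assert (Hlog : forall a b, 0 < m -> m <= b -> b <= a -> 0 <= ln a - ln b <= / m * (a - b)).
  { intros a b Hm Hb Hab. split; [pose proof (ln_le b a ltac:(lra) Hab); lra|].
    replace (ln a - ln b) with (ln (a / b))
      by (unfold Rdiv; rewrite ln_mult, ln_Rinv; try apply Rinv_0_lt_compat; lra).
    pose proof (exp_ineq1_le (ln (a / b))) as E. rewrite exp_ln in E by (apply Rdiv_lt_0_compat; lra).
    apply Rle_trans with ((a - b) * / b); [replace ((a - b) * / b) with (a / b - 1) by (field; lra); lra|].
    rewrite Rmult_comm. apply Rmult_le_compat_r; [lra|]. apply Rinv_le_contravar; lra. }
  intros Hm Hx Hy. destruct (Rle_dec y x).
  - destruct (Hlog x y) as [A B]; auto. rewrite !Rabs_pos_eq; lra.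
  - destruct (Hlog y x) as [A B]; auto; try lra.
    rewrite <- (Rabs_Ropp (ln x - ln y)), <- (Rabs_Ropp (x - y)), !Rabs_pos_eq; lra.
Qed.

Lemma Rabs_exp_sub_le x y B : x <= B -> y <= B -> Rabs (exp x - exp y) <= exp B * Rabs (x - y).
Proof.
  assert (Hexp : forall a b, b <= a -> a <= B -> 0 <= exp a - exp b <= exp B * (a - b)).
  { intros a b Hab HaB.
    assert (exp b <= exp a) by (destruct (Req_dec a b); [subst; lra|left; apply exp_increasing; lra]).
    assert (exp a <= exp B) by (destruct (Req_dec a B); [subst; lra|left; apply exp_increasing; lra]).
    split; [lra|]. pose proof (exp_ineq1_le (b - a)).
    replace (exp b) with (exp a * exp (b - a)) by (rewrite <- exp_plus; f_equal; ring).
    pose proof (exp_pos a). nra. }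
  intros Hx Hy. destruct (Rle_dec y x).
  - destruct (Hexp x y) as [A Bd]; auto. rewrite !Rabs_pos_eq; lra.
  - destruct (Hexp y x) as [A Bd]; auto; try lra.
    rewrite <- (Rabs_Ropp (exp x - exp y)), <- (Rabs_Ropp (x - y)), !Rabs_pos_eq; lra.
Qed.

Lemma ln_sqrt x : 0 < x -> ln (sqrt x) = ln x / 2.
Proof.
  intro H. pose proof (sqrt_lt_R0 x H).
  assert (ln x = ln (sqrt x) + ln (sqrt x)) by (rewrite <- ln_mult, sqrt_sqrt; lra).
  lra.
Qed.

Lemma is_lim_seq_dist_le (x y : nat -> R) (xl yl K : R) : is_lim_seq y yl ->
  (forall n, Rabs (x n - xl) <= K * Rabs (y n - yl)) -> is_lim_seq x xl.
Proof.
  intros Hy H.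
  assert (Hd : is_lim_seq (fun n => K * Rabs (y n - yl)) 0).
  { replace (Finite 0) with (Rbar_mult K (Rbar_abs (yl - yl)))
      by (simpl; rewrite Rminus_diag, Rabs_R0; f_equal; ring).
    apply is_lim_seq_scal_l, is_lim_seq_abs, is_lim_seq_minus'; auto. apply is_lim_seq_const. }
  apply is_lim_seq_le_le with (u := fun n => xl - K * Rabs (y n - yl))
                              (w := fun n => xl + K * Rabs (y n - yl)).
  - intro n. specialize (H n). apply Rabs_le_between in H. lra.
  - replace (Finite xl) with (Finite (xl - 0)) by (f_equal; ring).
    apply is_lim_seq_minus'; auto. apply is_lim_seq_const.
  - replace (Finite xl) with (Finite (xl + 0)) by (f_equal; ring).
    apply is_lim_seq_plus'; auto. apply is_lim_seq_const.
Qed.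

Lemma is_lim_seq_0_contraction (e eta : nat -> R) (E th : R) :
  (forall n, 0 <= e n <= E) -> 0 <= th < 1 -> is_lim_seq eta 0 ->
  (forall n, e n <= eta n + th * e (S n)) -> is_lim_seq e 0.
Proof.
  intros He Hth Heta Hrec.
  apply is_lim_seq_Reals in Heta. apply is_lim_seq_Reals. intros eps Heps.
  destruct (Heta (eps * (1 - th) / 2)) as [N HN].
  { apply Rdiv_lt_0_compat; [|lra]. apply Rmult_lt_0_compat; lra. }
  assert (Hiter : forall m n, (n >= N)%nat -> e n <= eps / 2 + th ^ m * E).
  { induction m as [|m IH]; intros n Hn; [simpl; pose proof (He n); lra|].
    specialize (HN n Hn). unfold R_dist in HN. rewrite Rminus_0_r in HN.
    apply Rabs_def2 in HN. specialize (IH (S n) ltac:(lia)). specialize (Hrec n). simpl.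
    apply Rle_trans with (eps * (1 - th) / 2 + th * (eps / 2 + th ^ m * E)); [|right; field].
    apply Rle_trans with (eta n + th * e (S n)); auto.
    apply Rplus_le_compat; [lra|]. apply Rmult_le_compat_l; lra. }
  assert (E0 : 0 <= E) by (pose proof (He O); lra).
  destruct (pow_lt_1_zero th ltac:(rewrite Rabs_pos_eq; lra) (eps / (2 * (E + 1)))) as [m Hm].
  { apply Rdiv_lt_0_compat; lra. }
  exists N. intros n Hn. unfold R_dist. rewrite Rminus_0_r.
  specialize (Hm m (le_n m)). rewrite Rabs_pos_eq in Hm by (apply pow_le; lra).
  specialize (Hiter m n Hn). pose proof (He n). rewrite Rabs_pos_eq by lra.
  assert (th ^ m * E <= th ^ m * (E + 1)) by (apply Rmult_le_compat_l; [apply pow_le|]; lra).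
  apply Rmult_lt_compat_r with (r := E + 1) in Hm; [|lra].
  replace (eps / (2 * (E + 1)) * (E + 1)) with (eps / 2) in Hm by (field; lra). lra.
Qed.

Lemma Rabs_le_maxtail (f : nat -> R) (Z : R) n : (forall k, Rabs (f k) <= Z) ->
  Rabs (f n) <= maxtail f n.
Proof.
  intro H. unfold maxtail.
  assert (H1 : Rbar_le (Rabs (f n)) (Sup_seq (fun k => Rabs (f (n + k)%nat)))).
  { apply Sup_seq_minor_le with O. rewrite Nat.add_0_r. simpl. lra. }
  assert (H2 : Rbar_le (Sup_seq (fun k => Rabs (f (n + k)%nat))) Z).
  { apply (is_sup_seq_lub _ _ (Sup_seq_correct _)). intros x [k ->]. simpl. apply H. }
  destruct (Sup_seq (fun k => Rabs (f (n + k)%nat))); simpl in *; try contradiction. auto.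
Qed.

Lemma prodR_ext f g n : (forall k, (1 <= k)%nat -> f k = g k) -> prodR f n = prodR g n.
Proof. intro H. induction n as [|n IH]; simpl; auto. rewrite IH, H by lia. reflexivity. Qed.

Lemma prodR_pos f n : (forall k, (1 <= k)%nat -> 0 < f k) -> 0 < prodR f n.
Proof. intro H. induction n; simpl; [lra|]. apply Rmult_lt_0_compat; auto. apply H; lia. Qed.

Lemma prodR_mul_inv f n : (forall k, (1 <= k)%nat -> f k <> 0) ->
  prodR f n * prodR (fun k => / f k) n = 1.
Proof.
  intro H. induction n as [|n IH]; simpl; [ring|].
  replace (prodR f n * f (S n) * (prodR (fun k => / f k) n * / f (S n))) with
    ((prodR f n * prodR (fun k => / f k) n) * (f (S n) * / f (S n))) by ring.
  rewrite IH, Rinv_r by (apply H; lia). ring.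
Qed.

Lemma prodPar_ext f g n : (forall k, (1 <= k)%nat -> f k = g k) -> prodPar f n = prodPar g n.
Proof.
  intro H. apply prodR_ext. intros k Hk. rewrite H by exact Hk. reflexivity.
Qed.

Lemma prodPar_pos f n : (forall k, (1 <= k)%nat -> 0 < f k) -> 0 < prodPar f n.
Proof. intro H. apply prodR_pos. intros k Hk. destruct (Bool.eqb _ _); auto. lra. Qed.

Lemma prodPar_SS f n : prodPar f (S (S n)) = prodPar f n * f (S (S n)).
Proof.
  unfold prodPar. cbn [prodR]. change (Nat.even (S (S n))) with (Nat.even n).
  rewrite Nat.even_succ, <- Nat.negb_even. destruct (Nat.even n); simpl; ring.
Qed.

Lemma prodPar_double f N : prodPar f (2 * S N) = prodPar f (2 * N) * f (2 * N + 2)%nat.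
Proof.
  replace (2 * S N)%nat with (S (S (2 * N))) by lia. rewrite prodPar_SS. do 2 f_equal. lia.
Qed.

Lemma prodPar_double_pred f N :
  prodPar f (2 * S N - 1) = prodPar f (2 * N - 1) * f (2 * N + 1)%nat.
Proof.
  destruct N as [|N]. { unfold prodPar; simpl; ring. }
  replace (2 * S (S N) - 1)%nat with (S (S (2 * S N - 1))) by lia. rewrite prodPar_SS.
  do 2 f_equal. lia.
Qed.

Definition Sroot (x : R) : R := (x + 2 + sqrt (x * (x + 4))) / 2.

Lemma Sroot_spec x : 0 <= x -> Sroot x + / Sroot x = x + 2 /\ 1 + x / 2 <= Sroot x.
Proof.
  intros H. unfold Sroot.
  assert (Ha : 0 <= x * (x + 4)) by nra.
  pose proof (sqrt_pos (x * (x + 4))). pose proof (sqrt_sqrt _ Ha).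
  split; [|lra].
  replace (/ ((x + 2 + sqrt (x * (x + 4))) / 2)) with ((x + 2 - sqrt (x * (x + 4))) / 2); [lra|].
  field_simplify_eq; [nra|lra].
Qed.

Section Potential.

Variable V : nat -> R.
Variables C M : R.
Hypothesis HC : 0 < C.
Hypothesis HV : forall n, (1 <= n)%nat -> C <= V n.
Hypothesis HM : forall n, (1 <= n)%nat -> Rabs (V n) <= M.
Hypothesis Hser : summable (fun n => INR n * (V (n + 1)%nat - V n)).

(* [disc n = b_n^2 - 4] *)
Definition disc n := V n * (V n + 4).
Local Notation disc_inf := (Vinf V * (Vinf V + 4)).
Local Notation disc_min := (C * (C + 4)).
Local Notation S_inf := (Sroot (Vinf V)).

Lemma V_le_M n : (1 <= n)%nat -> V n <= M.
Proof. intro H. apply (Rabs_le_between (V n) M), HM, H. Qed.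

Lemma V_l1_cvg : l1_cvg V (Vinf V).
Proof.
  destruct (l1_cvg_of_weighted_increments V) as [l Hl].
  { refine (summable_ext _ _ _ Hser). intro n. rewrite Nat.add_1_r. reflexivity. }
  unfold Vinf. rewrite (is_lim_seq_unique _ _ (l1_cvg_lim _ _ Hl)). exact Hl.
Qed.

Lemma Vinf_bounds : C <= Vinf V <= M.
Proof.
  pose proof (l1_cvg_lim _ _ (proj2 (l1_cvg_S V _) V_l1_cvg)) as H. split.
  - refine (is_lim_seq_le (fun _ => C) (fun n => V (S n)) C _ _ (is_lim_seq_const _) H).
    intro; apply HV; lia.
  - refine (is_lim_seq_le (fun n => V (S n)) (fun _ => M) _ M _ H (is_lim_seq_const _)).
    intro; apply V_le_M; lia.
Qed.

Lemma disc_min_pos : 0 < disc_min.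
Proof. nra. Qed.

Lemma disc_bounds n : (1 <= n)%nat -> disc_min <= disc n <= M * (M + 4).
Proof. intro H. pose proof (HV n H). pose proof (V_le_M n H). unfold disc. split; nra. Qed.

Lemma disc_pos n : (1 <= n)%nat -> 0 < disc n.
Proof. intro H. pose proof (disc_bounds n H). pose proof disc_min_pos. lra. Qed.

Lemma disc_inf_pos : 0 < disc_inf.
Proof. pose proof Vinf_bounds. nra. Qed.

Lemma Rabs_disc_sub_le x y : (1 <= x)%nat -> (1 <= y)%nat ->
  Rabs (disc x - disc y) <= (2 * M + 4) * Rabs (V x - V y).
Proof.
  intros Hx Hy. unfold disc.
  replace (V x * (V x + 4) - V y * (V y + 4)) with ((V x - V y) * (V x + V y + 4)) by ring.
  rewrite Rabs_mult, Rmult_comm. apply Rmult_le_compat_r; [apply Rabs_pos|].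
  pose proof (HV x Hx); pose proof (HV y Hy); pose proof (V_le_M x Hx); pose proof (V_le_M y Hy).
  rewrite Rabs_pos_eq; lra.
Qed.

Lemma disc_l1_cvg : l1_cvg (fun n => disc (S n)) disc_inf.
Proof.
  pose proof (proj2 (l1_cvg_S _ _) V_l1_cvg).
  apply l1_cvg_mult; auto. apply (l1_cvg_plus _ (fun _ => 4)); auto. apply l1_cvg_const.
Qed.

Lemma Sseq_spec n : (1 <= n)%nat -> Sseq V n + / Sseq V n = V n + 2 /\ 1 + C / 2 <= Sseq V n.
Proof.
  intro H. pose proof (HV n H). destruct (Sroot_spec (V n)) as [E B]; [lra|].
  split; [exact E|]. unfold Sseq; fold (Sroot (V n)). lra.
Qed.

Lemma Sseq_ge n : (1 <= n)%nat -> 1 + C / 2 <= Sseq V n.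
Proof. intro H. apply (Sseq_spec n H). Qed.

Lemma S_inf_spec : S_inf + / S_inf = Vinf V + 2 /\ 1 + C / 2 <= S_inf.
Proof. pose proof Vinf_bounds. destruct (Sroot_spec (Vinf V)) as [E B]; lra. Qed.

Lemma S_l1_cvg : l1_cvg (fun n => Sseq V (S n)) S_inf.
Proof.
  apply l1_cvg_ext with (fun n => / 2 * (V (S n) + 2 + sqrt (disc (S n))))
                        (/ 2 * (Vinf V + 2 + sqrt disc_inf)).
  { intro n; unfold Sseq, disc; field. }
  { unfold Sroot; field. }
  apply l1_cvg_scal, l1_cvg_plus.
  - apply (l1_cvg_plus _ (fun _ => 2)); [apply l1_cvg_S, V_l1_cvg|apply l1_cvg_const].
  - apply l1_cvg_sqrt; [apply disc_l1_cvg| |apply disc_inf_pos].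
    intro n. left. apply disc_pos. lia.
Qed.

Lemma S_increments_summable : summable (fun n => Sseq V (n + 2) - Sseq V (n + 1)).
Proof.
  pose proof S_l1_cvg as H. pose proof (proj2 (l1_cvg_S _ _) H) as H2.
  eapply summable_ext; [|apply (summable_minus _ _ H2 H)].
  intro n. replace (n + 2)%nat with (S (S n)) by lia. replace (n + 1)%nat with (S n) by lia. ring.
Qed.

Local Notation Pz := (Cz_partial V).

Lemma Cz_partial_S N : Pz (S N) = Pz N * sqrt (disc (2 * N + 2) / disc (2 * N + 1)).
Proof.
  unfold Cz_partial. cbn [prodR]. unfold disc.
  replace (2 * S N)%nat with (2 * N + 2)%nat by lia.
  replace (2 * N + 2 - 1)%nat with (2 * N + 1)%nat by lia. reflexivity.
Qed.

Lemma disc_ratio_pos N : 0 < disc (2 * N + 2) / disc (2 * N + 1).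
Proof. apply Rdiv_lt_0_compat; apply disc_pos; lia. Qed.

Lemma Cz_partial_sq N : 0 < Pz N /\ Pz N ^ 2 * prodPar disc (2 * N - 1) = prodPar disc (2 * N).
Proof.
  induction N as [|N [H1 H2]]; [unfold Cz_partial, prodPar; simpl; lra|].
  rewrite Cz_partial_S. pose proof (disc_ratio_pos N) as Hq.
  split; [apply Rmult_lt_0_compat; auto; apply sqrt_lt_R0; auto|].
  rewrite prodPar_double_pred, prodPar_double, <- H2.
  replace ((Pz N * sqrt (disc (2 * N + 2) / disc (2 * N + 1))) ^ 2) with
    (Pz N ^ 2 * (sqrt (disc (2 * N + 2) / disc (2 * N + 1)) *
                 sqrt (disc (2 * N + 2) / disc (2 * N + 1)))) by ring.
  rewrite sqrt_sqrt by lra. field. apply Rgt_not_eq, disc_pos. lia.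
Qed.

Definition log_Cz_partial N := psum (fun m => ln (sqrt (disc (2 * m + 2) / disc (2 * m + 1)))) N.

Lemma Cz_partial_exp N : Pz N = exp (log_Cz_partial N).
Proof.
  induction N as [|N IH]; [unfold log_Cz_partial, Cz_partial; simpl; rewrite exp_0; auto|].
  rewrite Cz_partial_S. unfold log_Cz_partial. cbn [psum]. fold (log_Cz_partial N).
  rewrite exp_plus, <- IH, exp_ln; auto. apply sqrt_lt_R0, disc_ratio_pos.
Qed.

Lemma Rabs_ln_sqrt_disc_ratio_le N :
  Rabs (ln (sqrt (disc (2 * N + 2) / disc (2 * N + 1)))) <=
  (M + 2) / disc_min * Rabs (V (2 * N + 2)%nat - V (2 * N + 1)%nat).
Proof.
  assert (Hln : ln (sqrt (disc (2 * N + 2) / disc (2 * N + 1))) =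
                (ln (disc (2 * N + 2)) - ln (disc (2 * N + 1))) / 2).
  { rewrite ln_sqrt by apply disc_ratio_pos. f_equal. unfold Rdiv.
    rewrite ln_mult, ln_Rinv; try apply Rinv_0_lt_compat; try apply disc_pos; try lia. reflexivity. }
  rewrite Hln. unfold Rdiv. rewrite Rabs_mult, (Rabs_pos_eq (/ 2)) by lra.
  pose proof disc_min_pos.
  eapply Rle_trans.
  { apply Rmult_le_compat_r; [lra|].
    apply (Rabs_ln_sub_le _ _ disc_min); auto; apply disc_bounds; lia. }
  pose proof (Rabs_disc_sub_le (2 * N + 2) (2 * N + 1) ltac:(lia) ltac:(lia)).
  assert (0 < / disc_min) by (apply Rinv_0_lt_compat; lra).
  apply Rle_trans with (/ disc_min * ((2 * M + 4) * Rabs (V (2 * N + 2)%nat - V (2 * N + 1)%nat)) * / 2).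
  - apply Rmult_le_compat_r; [lra|]. apply Rmult_le_compat_l; lra.
  - right. field. lra.
Qed.

Lemma log_Cz_partial_l1_cvg : exists l, l1_cvg log_Cz_partial l.
Proof.
  apply l1_cvg_of_weighted_increments.
  refine (summable_le _ _ ((M + 2) / disc_min) _ (summable_odd _ Hser)). intro N.
  unfold log_Cz_partial. cbn [psum].
  replace (2 * N + 1 + 1)%nat with (2 * N + 2)%nat by lia.
  rewrite Rplus_minus_l, !Rabs_mult, !(Rabs_pos_eq (INR _)) by apply pos_INR.
  assert (HN : INR N <= INR (2 * N + 1)) by (apply le_INR; lia).
  assert (0 <= (M + 2) / disc_min).
  { pose proof (HV 1 (le_n 1)); pose proof (V_le_M 1 (le_n 1)); pose proof disc_min_pos.
    apply Rdiv_le_0_compat; lra. }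
  pose proof (Rabs_ln_sqrt_disc_ratio_le N). pose proof (pos_INR N).
  pose proof (Rabs_pos (V (2 * N + 2)%nat - V (2 * N + 1)%nat)).
  pose proof (Rabs_pos (ln (sqrt (disc (2 * N + 2) / disc (2 * N + 1))))). nra.
Qed.

Definition Cz_prod := real (Lim_seq Pz).

Lemma Cz_partial_l1_cvg : l1_cvg Pz Cz_prod /\ 0 < Cz_prod /\
  exists Pmin, 0 < Pmin /\ forall N, Pmin <= Pz N.
Proof.
  destruct log_Cz_partial_l1_cvg as [l Hl]. destruct (l1_cvg_bounded _ _ Hl) as [B HB].
  assert (HlB : Rabs l <= B).
  { refine (is_lim_seq_le (fun n => Rabs (log_Cz_partial n)) (fun _ => B) (Rabs l) B HB _
              (is_lim_seq_const _)).
    apply (is_lim_seq_abs _ l), l1_cvg_lim, Hl. }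
  apply Rabs_le_between in HlB.
  assert (HP : l1_cvg Pz (exp l)).
  { refine (summable_le _ _ (exp B) _ Hl). intro N. rewrite Cz_partial_exp.
    apply Rabs_exp_sub_le; [|lra]. apply (Rabs_le_between _ B), HB. }
  assert (E : Cz_prod = exp l).
  { unfold Cz_prod. rewrite (is_lim_seq_unique _ _ (l1_cvg_lim _ _ HP)). reflexivity. }
  rewrite E. split; [exact HP|]. split; [apply exp_pos|].
  exists (exp (- B)). split; [apply exp_pos|]. intro N. rewrite Cz_partial_exp.
  specialize (HB N). apply Rabs_le_between in HB.
  destruct (Req_dec (log_Cz_partial N) (- B)) as [e|]; [rewrite e; lra|].
  left; apply exp_increasing; lra.
Qed.

Local Notation z_inf := (Rpower (Vinf V * (Vinf V + 4)) (- (1 / 4))).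

Lemma z_inf_pos : 0 < z_inf.
Proof. apply exp_pos. Qed.

Lemma z_inf_sq : z_inf * z_inf * sqrt disc_inf = 1.
Proof.
  pose proof disc_inf_pos. rewrite <- Rpower_plus, <- Rpower_sqrt, <- Rpower_plus by auto.
  replace (- (1 / 4) + - (1 / 4) + / 2) with 0 by field. apply Rpower_O; auto.
Qed.

Lemma Cz_eq : Cz V = z_inf * Cz_prod.
Proof. reflexivity. Qed.

Lemma Cz_pos : 0 < Cz V.
Proof.
  rewrite Cz_eq. pose proof z_inf_pos. destruct Cz_partial_l1_cvg as [_ [Hp _]]. nra.
Qed.

Lemma zseq_disc n : zseq V n =
  (if Nat.even n then Cz V else / Cz V) * sqrt (prodPar disc (n - 1) / prodPar disc n).
Proof.
  unfold zseq. rewrite !(prodPar_ext (fun k => bseq V k ^ 2 - 4) disc); auto;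
    intros; unfold bseq, disc; ring.
Qed.

Lemma prodPar_disc_pos n : 0 < prodPar disc n.
Proof. apply prodPar_pos, disc_pos. Qed.

Lemma zseq_even N : zseq V (2 * N) = Cz V / Pz N.
Proof.
  rewrite zseq_disc, Nat.even_even. unfold Rdiv at 2. f_equal. destruct (Cz_partial_sq N) as [H1 H2].
  rewrite <- H2. pose proof (prodPar_disc_pos (2 * N - 1)).
  replace (prodPar disc (2 * N - 1) / (Pz N ^ 2 * prodPar disc (2 * N - 1))) with (/ Pz N * / Pz N)
    by (field; lra).
  apply sqrt_square. left; apply Rinv_0_lt_compat; auto.
Qed.

Lemma zseq_odd N : zseq V (2 * N + 1) = / Cz V * (Pz N / sqrt (disc (2 * N + 1))).
Proof.
  rewrite zseq_disc, Nat.even_odd. f_equal. destruct (Cz_partial_sq N) as [H1 H2].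
  replace (2 * N + 1 - 1)%nat with (2 * N)%nat by lia.
  replace (2 * N + 1)%nat with (2 * S N - 1)%nat at 1 by lia.
  rewrite prodPar_double_pred, <- H2.
  pose proof (prodPar_disc_pos (2 * N - 1)). pose proof (disc_pos (2 * N + 1) ltac:(lia)).
  replace (Pz N ^ 2 * prodPar disc (2 * N - 1) / (prodPar disc (2 * N - 1) * disc (2 * N + 1)))
    with ((Pz N * Pz N) / disc (2 * N + 1)) by (field; lra).
  rewrite sqrt_div_alt, sqrt_square by lra. reflexivity.
Qed.

Lemma zseq_mul_S n : (1 <= n)%nat ->
  zseq V n * zseq V (n + 1) = 1 / sqrt (V (n + 1)%nat * (V (n + 1)%nat + 4)).
Proof.
  intro Hn. pose proof Cz_pos. rewrite !zseq_disc.
  replace (n + 1 - 1)%nat with n by lia.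
  replace (prodPar disc (n + 1)) with (prodPar disc (n - 1) * disc (n + 1)%nat)
    by (replace (n + 1)%nat with (S (S (n - 1))) by lia; rewrite prodPar_SS; reflexivity).
  pose proof (prodPar_disc_pos (n - 1)). pose proof (prodPar_disc_pos n).
  pose proof (disc_pos (n + 1) ltac:(lia)). fold (disc (n + 1)).
  set (A := prodPar disc (n - 1)) in *. set (B := prodPar disc n) in *.
  assert (Esign : (if Nat.even n then Cz V else / Cz V) *
                  (if Nat.even (n + 1) then Cz V else / Cz V) = 1).
  { rewrite Nat.add_1_r, Nat.even_succ, <- Nat.negb_even.
    destruct (Nat.even n); simpl; field; lra. }
  transitivity ((if Nat.even n then Cz V else / Cz V) * (if Nat.even (n + 1) then Cz V else / Cz V) *
     sqrt (A / B * (B / (A * disc (n + 1)%nat)))).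
  { rewrite sqrt_mult; [ring| |]; left; apply Rdiv_lt_0_compat; auto; apply Rmult_lt_0_compat; auto. }
  rewrite Esign, Rmult_1_l.
  replace (A / B * (B / (A * disc (n + 1)%nat))) with (1 / disc (n + 1)%nat) by (field; lra).
  rewrite sqrt_div_alt, sqrt_1; auto.
Qed.

Lemma zseq_even_l1_cvg : l1_cvg (fun N => zseq V (2 * N)) z_inf.
Proof.
  destruct Cz_partial_l1_cvg as [HPc [Hp [Pmin [HPmin HPm]]]]. pose proof Cz_pos.
  apply l1_cvg_ext with (fun N => Cz V * / Pz N) (Cz V * / Cz_prod).
  { intro N; rewrite zseq_even; auto. }
  { rewrite Cz_eq; field; lra. }
  apply l1_cvg_scal, (l1_cvg_inv _ _ Pmin); auto; [|lra].
  intro n. rewrite Rabs_pos_eq; auto. pose proof (HPm n); lra.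
Qed.

Lemma zseq_odd_l1_cvg : l1_cvg (fun N => zseq V (2 * N + 1)) z_inf.
Proof.
  destruct Cz_partial_l1_cvg as [HPc [Hp _]].
  pose proof Cz_pos. pose proof disc_inf_pos. pose proof disc_min_pos.
  pose proof (sqrt_lt_R0 _ disc_inf_pos). pose proof z_inf_sq.
  apply l1_cvg_ext with (fun N => / Cz V * (Pz N * / sqrt (disc (2 * N + 1))))
                        (/ Cz V * (Cz_prod * / sqrt disc_inf)).
  { intro N; rewrite zseq_odd; auto. }
  { pose proof z_inf_pos. rewrite Cz_eq. field_simplify_eq; [nra|repeat split; lra]. }
  apply l1_cvg_scal, l1_cvg_mult; auto. apply (l1_cvg_inv _ _ (sqrt disc_min)); [| |intro n|lra].
  - apply l1_cvg_sqrt; auto.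
    + refine (l1_cvg_ext _ _ _ _ _ eq_refl (summable_even _ disc_l1_cvg)).
      intro n. f_equal. lia.
    + intro n. left. apply disc_pos. lia.
  - apply sqrt_lt_R0; auto.
  - rewrite Rabs_pos_eq by apply sqrt_pos. apply sqrt_le_1_alt, disc_bounds. lia.
Qed.

Lemma zseq_l1_cvg : l1_cvg (zseq V) z_inf.
Proof. apply summable_even_odd; [apply zseq_even_l1_cvg|apply zseq_odd_l1_cvg]. Qed.

Lemma zseq_lb : exists zmin, 0 < zmin /\ forall n, zmin <= zseq V n.
Proof.
  destruct Cz_partial_l1_cvg as [HPc [Hp [Pmin [HPmin HPm]]]].
  destruct (l1_cvg_bounded _ _ HPc) as [Pmax HPmax].
  assert (HPmax' : forall N, Pz N <= Pmax) by (intro N; apply (Rabs_le_between _ Pmax), HPmax).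
  pose proof Cz_pos. pose proof (disc_bounds 1 (le_n 1)). pose proof disc_min_pos.
  assert (Pmaxpos : 0 < Pmax) by (pose proof (HPmax' 0%nat); pose proof (HPm 0%nat); lra).
  assert (HMM : 0 < sqrt (M * (M + 4))) by (apply sqrt_lt_R0; lra).
  exists (Rmin (Cz V / Pmax) (/ Cz V * (Pmin / sqrt (M * (M + 4))))).
  split.
  { apply Rmin_pos; [apply Rdiv_lt_0_compat; auto|].
    apply Rmult_lt_0_compat; [apply Rinv_0_lt_compat|apply Rdiv_lt_0_compat]; auto. }
  intro n. destruct (Nat.Even_or_Odd n) as [[N ->]|[N ->]].
  - eapply Rle_trans; [apply Rmin_l|]. rewrite zseq_even.
    apply Rmult_le_compat_l; [lra|]. apply Rinv_le_contravar; auto. pose proof (HPm N); lra.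
  - eapply Rle_trans; [apply Rmin_r|]. rewrite zseq_odd.
    apply Rmult_le_compat_l; [left; apply Rinv_0_lt_compat; auto|].
    pose proof (disc_bounds (2 * N + 1) ltac:(lia)).
    apply Rmult_le_compat; auto; [lra|left; apply Rinv_0_lt_compat; auto|].
    apply Rinv_le_contravar; [apply sqrt_lt_R0; lra|apply sqrt_le_1_alt; lra].
Qed.

Lemma Vtilde_l1_cvg : l1_cvg (fun n => Vtilde V (n + 1)) (Vinf V).
Proof.
  destruct zseq_lb as [zmin [Hz0 Hz]].
  assert (zpos : forall n, 0 < zseq V n) by (intro n; pose proof (Hz n); lra).
  assert (Spos : forall n, 0 < Sseq V (S n)) by (intro n; pose proof (Sseq_ge (S n) ltac:(lia)); lra).
  pose proof z_inf_pos. destruct S_inf_spec as [Sid Sge].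
  apply l1_cvg_ext with
    (fun n => zseq V (S (S n)) * / zseq V (S n) * Sseq V (S (S n))
              + zseq V n * (/ zseq V (S n) * / Sseq V (S n)) - 2)
    (z_inf * / z_inf * S_inf + z_inf * (/ z_inf * / S_inf) - 2).
  { intro n. unfold Vtilde. replace (n + 1 + 1)%nat with (S (S n)) by lia.
    replace (n + 1 - 1)%nat with n by lia. replace (n + 1)%nat with (S n) by lia.
    pose proof (zpos (S n)). pose proof (Spos n). field. lra. }
  { replace (z_inf * / z_inf * S_inf + z_inf * (/ z_inf * / S_inf) - 2)
      with (S_inf + / S_inf - 2) by (field; lra). lra. }
  pose proof zseq_l1_cvg as Hz1. pose proof (proj2 (l1_cvg_S _ _) Hz1) as Hz2.
  assert (Hzinv : l1_cvg (fun n => / zseq V (S n)) (/ z_inf)).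
  { apply (l1_cvg_inv _ _ zmin); auto; [|lra]. intro n. rewrite Rabs_pos_eq; auto. left; auto. }
  apply (l1_cvg_minus _ (fun _ => 2)); [|apply l1_cvg_const].
  apply l1_cvg_plus; apply l1_cvg_mult; [apply l1_cvg_mult| |exact Hz1|apply l1_cvg_mult]; auto.
  - apply (proj2 (l1_cvg_S (fun n => zseq V (S n)) _) Hz2).
  - apply (proj2 (l1_cvg_S (fun n => Sseq V (S n)) _) S_l1_cvg).
  - apply (l1_cvg_inv _ _ 1); [apply S_l1_cvg|lra| |lra].
    intro n. rewrite Rabs_pos_eq by (left; auto). pose proof (Sseq_ge (S n) ltac:(lia)). lra.
Qed.

Lemma Vtilde_sub_V_summable : summable (fun n => Vtilde V (n + 1) - V (n + 1)%nat).
Proof.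
  pose proof (l1_cvg_minus _ _ _ _ Vtilde_l1_cvg (proj2 (l1_cvg_S _ _) V_l1_cvg)) as H.
  eapply summable_ext; [|exact H]. intro n. cbv beta. rewrite Nat.add_1_r. ring.
Qed.

Lemma prodS_mul_prodSinv_le i j : (i <= j)%nat ->
  0 < prodR (Sseq V) i * prodR (fun l => / Sseq V l) j <= 1.
Proof.
  intro H. induction H as [|j Hij IH].
  - rewrite prodR_mul_inv; [lra|]. intros l Hl. pose proof (Sseq_ge l Hl). lra.
  - cbn [prodR]. pose proof (Sseq_ge (S j) ltac:(lia)).
    assert (0 < / Sseq V (S j) <= 1).
    { split; [apply Rinv_0_lt_compat; lra|]. rewrite <- Rinv_1. apply Rinv_le_contravar; lra. }
    rewrite <- Rmult_assoc. split; [apply Rmult_lt_0_compat; lra|].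
    replace 1 with (1 * 1) by ring. apply Rmult_le_compat; lra.
Qed.

Lemma Green_bounded : exists B, forall m n, Rabs (phiP V (Nat.min m n) * phiM V (Nat.max m n)) <= B.
Proof.
  destruct (l1_cvg_bounded _ _ zseq_l1_cvg) as [Z HZ]. exists (Z * Z). intros m n.
  unfold phiP, phiM. destruct (prodS_mul_prodSinv_le (Nat.min m n) (Nat.max m n) ltac:(lia)) as [A B].
  set (i := Nat.min m n) in *. set (j := Nat.max m n) in *.
  replace (zseq V i * prodR (Sseq V) i * (zseq V j * prodR (fun l => / Sseq V l) j)) with
    (zseq V i * zseq V j * (prodR (Sseq V) i * prodR (fun l => / Sseq V l) j)) by ring.
  rewrite Rabs_mult, (Rabs_pos_eq (prodR _ i * _)), Rabs_mult by lra.
  pose proof (HZ i); pose proof (HZ j). pose proof (Rabs_pos (zseq V i)). pose proof (Rabs_pos (zseq V j)).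
  apply Rle_trans with (Rabs (zseq V i) * Rabs (zseq V j) * 1); [apply Rmult_le_compat_l; nra|].
  rewrite Rmult_1_r. apply Rmult_le_compat; auto.
Qed.

Fixpoint usol (n : nat) : R :=
  match n with
  | O => 1
  | S m => match m with O => 1 | S k => (2 + V m) * usol m - usol k end
  end.

Lemma usol_rec n : usol (S (S n)) = (2 + V (S n)) * usol (S n) - usol n.
Proof. reflexivity. Qed.

Lemma usol_growth n :
  1 <= usol n /\ usol n <= usol (S n) /\ ((1 <= n)%nat -> (1 + C) * usol n <= usol (S n)).
Proof.
  induction n as [|n [A [B _]]]; [simpl; repeat split; lra || lia|].
  rewrite usol_rec. pose proof (HV (S n) ltac:(lia)).
  assert ((1 + C) * usol (S n) <= (2 + V (S n)) * usol (S n) - usol n) by nra.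
  repeat split; intros; nra.
Qed.

Lemma usol_pos n : 0 < usol n.
Proof. destruct (usol_growth n); lra. Qed.

Lemma usol_geom m j : usol (S m) * (1 + C) ^ j <= usol (S m + j).
Proof.
  induction j as [|j IH]; [simpl; rewrite Nat.add_0_r; lra|].
  replace (S m + S j)%nat with (S (S m + j)) by lia.
  destruct (usol_growth (S m + j)) as [_ [_ G]]. specialize (G ltac:(lia)).
  change ((1 + C) ^ S j) with ((1 + C) * (1 + C) ^ j).
  assert (0 < (1 + C) ^ j) by (apply pow_lt; lra). pose proof (usol_pos (S m)). nra.
Qed.

Definition uratio n := usol (S n) / usol n.

Lemma uratio_rec n : uratio (S n) = 2 + V (S n) - / uratio n.
Proof.
  unfold uratio. rewrite usol_rec. pose proof (usol_pos n). pose proof (usol_pos (S n)). field. lra.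
Qed.

Lemma uratio_ge n : 1 + C <= uratio (S n).
Proof.
  unfold uratio. destruct (usol_growth (S n)) as [_ [_ G]]. specialize (G ltac:(lia)).
  pose proof (usol_pos (S n)). apply Rmult_le_reg_r with (usol (S n)); auto.
  unfold Rdiv. rewrite Rmult_assoc, Rinv_l by lra. lra.
Qed.

Local Notation q := (/ (1 + C)).

Lemma q_bounds : 0 < q < 1.
Proof.
  split; [apply Rinv_0_lt_compat; lra|]. rewrite <- Rinv_1. apply Rinv_lt_contravar; lra.
Qed.

(* Both [uratio] and [Sseq] are near the fixed point of [r -> V + 2 - 1/r], which contracts
   by the factor [1 / (r S) <= q]. *)
Lemma uratio_dev_rec n :
  Rabs (uratio (S (S n)) - Sseq V (S (S n))) <=
  q * (Rabs (uratio (S n) - Sseq V (S n)) + Rabs (Sseq V (S (S n)) - Sseq V (S n))).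
Proof.
  rewrite uratio_rec.
  destruct (Sseq_spec (S (S n)) ltac:(lia)) as [Hid HSg]. pose proof (uratio_ge n) as Hr.
  replace (2 + V (S (S n)) - / uratio (S n) - Sseq V (S (S n))) with
    ((uratio (S n) - Sseq V (S n) + (Sseq V (S n) - Sseq V (S (S n)))) *
     (/ Sseq V (S (S n)) * / uratio (S n))).
  2: { replace (2 + V (S (S n))) with (Sseq V (S (S n)) + / Sseq V (S (S n))) by lra. field. lra. }
  rewrite Rabs_mult, Rmult_comm. apply Rmult_le_compat; try apply Rabs_pos.
  - rewrite Rabs_pos_eq by (left; apply Rmult_lt_0_compat; apply Rinv_0_lt_compat; lra).
    rewrite <- (Rmult_1_l q). apply Rmult_le_compat; try (left; apply Rinv_0_lt_compat; lra).
    + rewrite <- Rinv_1. apply Rinv_le_contravar; lra.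
    + apply Rinv_le_contravar; lra.
  - eapply Rle_trans; [apply Rabs_triang|]. rewrite (Rabs_minus_sym (Sseq V (S n))). lra.
Qed.

Lemma uratio_l1_cvg : l1_cvg (fun n => uratio (S n)) S_inf.
Proof.
  assert (Hdev : summable (fun n => uratio (S n) - Sseq V (S n))).
  { apply (summable_contraction _ (fun n => Sseq V (S (S n)) - Sseq V (S n)) q).
    - pose proof q_bounds; lra.
    - refine (summable_ext _ _ _ S_increments_summable). intro n.
      replace (n + 2)%nat with (S (S n)) by lia. replace (n + 1)%nat with (S n) by lia. reflexivity.
    - intro n. apply uratio_dev_rec. }
  apply l1_cvg_ext with (fun n => (uratio (S n) - Sseq V (S n)) + Sseq V (S n)) (0 + S_inf);
    [intro; ring|ring|].
  apply l1_cvg_plus; [|exact S_l1_cvg].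
  refine (summable_ext _ _ _ Hdev). intro; ring.
Qed.

Definition Tterm n j := / (usol (n + j) * usol (n + j + 1)).

Definition Ttail n := Series (Tterm n).

Lemma Tterm_bounds n j : 0 < Tterm n j <= q ^ j.
Proof.
  unfold Tterm. pose proof (usol_pos (n + j)). pose proof (usol_pos (n + j + 1)).
  destruct (usol_growth (n + j)) as [A _]. destruct (usol_growth (S n)) as [A1 _].
  pose proof (usol_geom n j) as G. replace (S n + j)%nat with (n + j + 1)%nat in G by lia.
  assert (0 < (1 + C) ^ j) by (apply pow_lt; lra).
  split; [apply Rinv_0_lt_compat; nra|].
  rewrite pow_inv. apply Rinv_le_contravar; [lra|nra].
Qed.

Lemma Tterm_ex_series n : ex_series (Tterm n).
Proof.
  apply (@ex_series_le R_AbsRing R_CompleteNormedModule) with (b := fun j => q ^ j).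
  - intro j. change (norm (Tterm n j)) with (Rabs (Tterm n j)).
    destruct (Tterm_bounds n j). rewrite Rabs_pos_eq; lra.
  - apply ex_series_geom. rewrite Rabs_pos_eq; destruct q_bounds; lra.
Qed.

Lemma Ttail_S n : Ttail n = / (usol n * usol (S n)) + Ttail (S n).
Proof.
  unfold Ttail. rewrite Series_incr_1 by apply Tterm_ex_series. f_equal.
  - unfold Tterm. rewrite Nat.add_0_r, Nat.add_1_r. reflexivity.
  - apply Series_ext. intro j. unfold Tterm. do 3 f_equal; lia.
Qed.

(* reduction of order *)
Definition wsol n := usol n * Ttail n.

Lemma wsol_solves n : (1 <= n)%nat ->
  - wsol (n + 1)%nat - wsol (n - 1)%nat + (2 + V n) * wsol n = 0.
Proof.
  intro Hn. destruct n as [|m]; [lia|]. unfold wsol.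
  replace (S m + 1)%nat with (S (S m)) by lia. replace (S m - 1)%nat with m by lia.
  pose proof (Ttail_S m) as E1. pose proof (Ttail_S (S m)) as E2.
  pose proof (usol_pos m). pose proof (usol_pos (S m)). pose proof (usol_pos (S (S m))).
  replace (Ttail (S (S m))) with (Ttail (S m) - / (usol (S m) * usol (S (S m)))) by lra.
  rewrite E1.
  replace ((2 + V (S m)) * (usol (S m) * Ttail (S m))) with ((usol (S (S m)) + usol m) * Ttail (S m))
    by (rewrite usol_rec; ring).
  field. lra.
Qed.

Definition yseq n := usol n * usol n * Ttail n.

Lemma yseq_rec n : yseq n = / uratio n + yseq (S n) * / (uratio n * uratio n).
Proof.
  unfold yseq, uratio. rewrite Ttail_S. pose proof (usol_pos n). pose proof (usol_pos (S n)).
  field. lra.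
Qed.

Lemma usol_sq_mul_Tterm_le n j : usol (S n) * usol (S n) * Tterm (S n) j <= q ^ j.
Proof.
  unfold Tterm. pose proof (usol_geom n j). pose proof (usol_pos (S n)).
  destruct (usol_growth (S n + j)) as [_ [B _]].
  assert (P0 : 0 < (1 + C) ^ j) by (apply pow_lt; lra).
  assert (P1 : 1 <= (1 + C) ^ j) by (apply pow_R1_Rle; lra).
  replace (S n + j + 1)%nat with (S (S n + j)) by lia. rewrite pow_inv.
  set (u1 := usol (S n)) in *. set (uA := usol (S n + j)) in *.
  set (uB := usol (S (S n + j))) in *. set (P := (1 + C) ^ j) in *.
  assert (P * u1 * u1 <= uA * uB) by (apply Rmult_le_compat; nra).
  apply Rle_trans with (u1 * u1 * / (P * u1 * u1)).
  - apply Rmult_le_compat_l; [nra|]. apply Rinv_le_contravar; nra.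
  - right. field. lra.
Qed.

Lemma yseq_bounds n : 0 <= yseq (S n) <= / (1 - q).
Proof.
  pose proof q_bounds. pose proof (usol_pos (S n)).
  unfold yseq, Ttail. split.
  - replace 0 with (0 * Series (Tterm (S n))) by ring. rewrite <- !Series_scal_l.
    apply Series_le; [|exact (ex_series_scal_l _ _ (Tterm_ex_series _))].
    intro j. destruct (Tterm_bounds (S n) j). split; [lra|nra].
  - rewrite <- Series_scal_l.
    rewrite <- (is_series_unique _ _ (is_series_geom q ltac:(rewrite Rabs_pos_eq; lra))).
    apply Series_le; [|apply ex_series_geom; rewrite Rabs_pos_eq; lra].
    intro j. destruct (Tterm_bounds (S n) j). split; [nra|apply usol_sq_mul_Tterm_le].
Qed.

(* the fixed point of y = 1 / S_inf + y / S_inf^2 *)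
Local Notation y_inf := (S_inf / (S_inf * S_inf - 1)).

Lemma yseq_dist_rec n :
  Rabs (yseq (S n) - y_inf) <=
    (Rabs (/ uratio (S n) - / S_inf) +
     y_inf * Rabs (/ uratio (S n) * / uratio (S n) - / S_inf * / S_inf)) +
    q * q * Rabs (yseq (S (S n)) - y_inf).
Proof.
  destruct S_inf_spec as [_ HS]. pose proof (uratio_ge n).
  assert (ys0 : 0 <= y_inf) by (apply Rdiv_le_0_compat; nra).
  assert (Hfix : y_inf = / S_inf + y_inf * / (S_inf * S_inf)) by (field; split; nra).
  rewrite yseq_rec, Hfix at 1.
  set (r := uratio (S n)) in *. set (ys := y_inf) in *.
  assert (0 < / r <= q) by (split; [apply Rinv_0_lt_compat|apply Rinv_le_contravar]; lra).
  replace (/ r + yseq (S (S n)) * / (r * r) - (/ S_inf + ys * / (S_inf * S_inf))) with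
    ((/ r - / S_inf) + ys * (/ r * / r - / S_inf * / S_inf) + (yseq (S (S n)) - ys) * (/ r * / r))
    by (field; split; lra).
  eapply Rle_trans; [apply Rabs_triang|]. eapply Rle_trans; [apply Rplus_le_compat_r, Rabs_triang|].
  rewrite !Rabs_mult, (Rabs_pos_eq ys), (Rabs_pos_eq (/ r)) by lra.
  apply Rplus_le_compat_l. rewrite Rmult_comm. apply Rmult_le_compat_r; [apply Rabs_pos|].
  apply Rmult_le_compat; lra.
Qed.

Lemma yseq_lim : is_lim_seq (fun n => yseq (S n)) y_inf.
Proof.
  destruct S_inf_spec as [_ HS]. pose proof q_bounds.
  assert (Hinv : l1_cvg (fun n => / uratio (S n)) (/ S_inf)).
  { apply (l1_cvg_inv _ _ 1); [apply uratio_l1_cvg|lra| |lra].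
    intro n. pose proof (uratio_ge n). rewrite Rabs_pos_eq; lra. }
  pose proof (l1_cvg_mult _ _ _ _ Hinv Hinv) as Hinv2.
  apply (is_lim_seq_dist_le (fun n => yseq (S n)) (fun n => Rabs (yseq (S n) - y_inf)) _ 0 1).
  2: { intro n. rewrite Rminus_0_r, Rabs_Rabsolu. lra. }
  apply (is_lim_seq_0_contraction _ (fun n => Rabs (/ uratio (S n) - / S_inf) +
     y_inf * Rabs (/ uratio (S n) * / uratio (S n) - / S_inf * / S_inf)) (/ (1 - q) + y_inf) (q * q));
    [|nra| |apply yseq_dist_rec].
  - intro n. split; [apply Rabs_pos|]. assert (0 <= y_inf) by (apply Rdiv_le_0_compat; nra).
    destruct (yseq_bounds n). apply Rabs_le_between. lra.
  - replace (Finite 0) with (Finite (0 + y_inf * 0)) by (f_equal; ring).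
    apply is_lim_seq_plus'; [|apply is_lim_seq_mult'; [apply is_lim_seq_const|]];
      apply (proj1 (is_lim_seq_abs_0 _)), summable_lim_0; auto.
Qed.

(* [gseq n = usol (n+1) * phiM V (n+1) / zseq V (n+1)] *)
Definition gseq n := usol (S n) * prodR (fun l => / Sseq V l) (S n).

Definition log_gstep n := ln (uratio (S n)) - ln (Sseq V (S (S n))).

Lemma gseq_exp n : gseq n = gseq O * exp (psum log_gstep n).
Proof.
  induction n as [|n IH]; [simpl; rewrite exp_0; ring|].
  cbn [psum]. rewrite exp_plus, <- Rmult_assoc, <- IH. unfold log_gstep.
  pose proof (uratio_ge n). pose proof (Sseq_ge (S (S n)) ltac:(lia)).
  unfold Rminus. rewrite exp_plus, exp_Ropp, !exp_ln by lra.
  pose proof (Sseq_ge (S n) ltac:(lia)). pose proof (usol_pos (S n)).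
  unfold gseq, uratio. cbn [prodR]. field. repeat split; lra.
Qed.

Lemma log_gstep_summable : summable log_gstep.
Proof.
  refine (summable_le _ _ 1 _ (l1_cvg_minus _ _ _ _ uratio_l1_cvg (proj2 (l1_cvg_S _ _) S_l1_cvg))).
  intro k. rewrite Rmult_1_l. pose proof (uratio_ge k). pose proof (Sseq_ge (S (S k)) ltac:(lia)).
  eapply Rle_trans; [apply (Rabs_ln_sub_le _ _ 1); lra|]. rewrite Rinv_1, Rmult_1_l.
  right. f_equal. ring.
Qed.

Lemma gseq_lim : exists g, 0 < g /\ is_lim_seq gseq g.
Proof.
  destruct (summable_psum_cvg _ log_gstep_summable) as [l Hl].
  destruct log_gstep_summable as [B HB].
  assert (Hpb : forall n, Rabs (psum log_gstep n) <= B)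
    by (intro n; eapply Rle_trans; [apply Rabs_psum_le|apply HB]).
  assert (HlB : Rabs l <= B).
  { refine (is_lim_seq_le (fun n => Rabs (psum log_gstep n)) (fun _ => B) (Rabs l) B Hpb _
              (is_lim_seq_const _)). apply (is_lim_seq_abs _ l Hl). }
  assert (Hg0 : 0 < gseq O).
  { unfold gseq. simpl. pose proof (Sseq_ge 1 (le_n 1)).
    assert (0 < / Sseq V 1) by (apply Rinv_0_lt_compat; lra). lra. }
  exists (gseq O * exp l). split; [apply Rmult_lt_0_compat; auto; apply exp_pos|].
  apply (is_lim_seq_dist_le _ (psum log_gstep) _ l (gseq O * exp B)); auto.
  intro n. rewrite gseq_exp, <- Rmult_minus_distr_l, Rabs_mult, Rabs_pos_eq, Rmult_assoc by lra.
  apply Rmult_le_compat_l; [lra|].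
  apply Rabs_exp_sub_le; [apply (Rabs_le_between _ B), Hpb|apply (Rabs_le_between _ B), HlB].
Qed.

Lemma phiM_pos n : 0 < phiM V n.
Proof.
  destruct zseq_lb as [zmin [Hz0 Hz]]. unfold phiM. apply Rmult_lt_0_compat; [pose proof (Hz n); lra|].
  apply prodR_pos. intros k Hk. pose proof (Sseq_ge k Hk). apply Rinv_0_lt_compat; lra.
Qed.

Lemma phiM_bounded : exists Z, forall k, Rabs (phiM V k) <= Z.
Proof.
  destruct (l1_cvg_bounded _ _ zseq_l1_cvg) as [Z HZ]. exists Z. intro k. unfold phiM.
  destruct (prodS_mul_prodSinv_le 0 k ltac:(lia)) as [A B]. simpl in A, B.
  rewrite Rmult_1_l in A, B. rewrite Rabs_mult, (Rabs_pos_eq (prodR _ k)) by lra.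
  pose proof (HZ k). pose proof (Rabs_pos (zseq V k)). nra.
Qed.

(* w / phiM = yseq / (usol * phiM) with yseq -> y_inf and usol * phiM = zseq * gseq -> z_inf * g *)
Lemma wsol_div_phiM_lim : exists kap, 0 < kap /\ is_lim_seq (fun n => wsol (S n) / phiM V (S n)) kap.
Proof.
  destruct gseq_lim as [g [Hg Hgl]]. destruct S_inf_spec as [_ HS]. pose proof z_inf_pos.
  assert (0 < y_inf) by (apply Rdiv_lt_0_compat; nra).
  exists (y_inf / (z_inf * g)). split; [apply Rdiv_lt_0_compat; nra|].
  apply is_lim_seq_ext with (fun n => yseq (S n) / (zseq V (S n) * gseq n)).
  { intro n. unfold wsol, yseq, gseq. pose proof (usol_pos (S n)). pose proof (phiM_pos (S n)).
    unfold phiM in *. field. repeat split; try lra; intro E; rewrite E in *; lra. }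
  apply is_lim_seq_div'; [apply yseq_lim| |nra].
  apply is_lim_seq_mult'; auto. apply l1_cvg_lim, (proj2 (l1_cvg_S _ _)), zseq_l1_cvg.
Qed.

Lemma recessive_solution : exists psi r : nat -> R,
  (forall n, (1 <= n)%nat -> - psi (n + 1)%nat - psi (n - 1)%nat + (2 + V n) * psi n = 0) /\
  is_lim_seq r 0 /\
  (forall n, (1 <= n)%nat -> psi n = phiM V n + r n * maxtail (phiM V) n).
Proof.
  destruct wsol_div_phiM_lim as [kap [Hk Hkl]].
  set (psi := fun n => wsol n / kap).
  destruct phiM_bounded as [Z HZ].
  assert (Hmt : forall n, phiM V n <= maxtail (phiM V) n).
  { intro n. pose proof (Rabs_le_maxtail _ Z n HZ). pose proof (phiM_pos n).
    rewrite Rabs_pos_eq in *; lra. }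
  exists psi, (fun n => (psi n - phiM V n) / maxtail (phiM V) n). split; [|split].
  - intros n Hn. unfold psi. rewrite <- (Rmult_0_l (/ kap)), <- (wsol_solves n Hn). field. lra.
  - assert (Hrho : is_lim_seq (fun n => psi (S n) / phiM V (S n)) 1).
    { apply is_lim_seq_ext with (fun n => wsol (S n) / phiM V (S n) / kap).
      { intro n. unfold psi. pose proof (phiM_pos (S n)). field. lra. }
      replace (Finite 1) with (Finite (kap / kap)) by (f_equal; field; lra).
      apply is_lim_seq_div'; [exact Hkl|apply is_lim_seq_const|lra]. }
    apply is_lim_seq_incr_1, (is_lim_seq_dist_le _ _ _ 1 1 Hrho).
    intro n. rewrite Rminus_0_r, Rmult_1_l. pose proof (phiM_pos (S n)). pose proof (Hmt (S n)).
    replace (psi (S n) / phiM V (S n) - 1) with ((psi (S n) - phiM V (S n)) / phiM V (S n))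
      by (field; lra).
    unfold Rdiv. rewrite !Rabs_mult, !Rabs_inv, !(Rabs_pos_eq (_ (S n))) by lra.
    apply Rmult_le_compat_l; [apply Rabs_pos|]. apply Rinv_le_contravar; lra.
  - intros n _. pose proof (phiM_pos n). pose proof (Hmt n). field. lra.
Qed.

End Potential.

Theorem theorem5 (V : nat -> R) (C : R) :
  0 < C ->
  (forall n : nat, (1 <= n)%nat -> C <= V n) ->
  (exists M : R, forall n : nat, (1 <= n)%nat -> Rabs (V n) <= M) ->
  ex_series (fun n : nat => Rabs (INR n * (V (n + 1)%nat - V n))) ->
  (* (a) *)
  ex_series (fun n : nat => Rabs (Sseq V (n + 2) - Sseq V (n + 1))) /\
  (* (b) *)
  (is_lim_seq V (Vinf V) /\ Vinf V <> 0 /\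
   exists p : R, is_lim_seq (Cz_partial V) p /\ p <> 0) /\
  (* (c) *)
  (forall n : nat, (1 <= n)%nat ->
     zseq V n * zseq V (n + 1) = 1 / sqrt (V (n + 1)%nat * (V (n + 1)%nat + 4))) /\
  ex_series (fun m : nat =>
     Rabs (zseq V (m + 1) - Rpower (Vinf V * (Vinf V + 4)) (- (1 / 4)))) /\
  (* (d) *)
  is_lim_seq (fun n : nat => Vtilde V (n + 1)) (Vinf V) /\
  (exists M : R, forall m n : nat, (1 <= m)%nat -> (1 <= n)%nat ->
     Rabs (phiP V (Nat.min m n) * phiM V (Nat.max m n)) <= M) /\
  (exists M : R, forall n : nat, (1 <= n)%nat -> Rabs (phiP V n * phiM V n) <= M) /\
  (* (e) *)
  ex_series (fun n : nat => Rabs (Vtilde V (n + 1) - V (n + 1)%nat)) /\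
  (exists psi r : nat -> R,
     (forall n : nat, (1 <= n)%nat ->
        - psi (n + 1)%nat - psi (n - 1)%nat + (2 + V n) * psi n = 0) /\
     is_lim_seq r 0 /\
     (forall n : nat, (1 <= n)%nat ->
        psi n = phiM V n + r n * maxtail (phiM V) n)).
Proof.
  intros HC HV [M HM] Hs. apply ex_series_summable in Hs.
  destruct (Cz_partial_l1_cvg V C M HC HV HM Hs) as [HP [HP0 _]].
  assert (C <= Vinf V <= M) by (apply (Vinf_bounds V C M); auto).
  assert (Hz : l1_cvg (zseq V) (Rpower (Vinf V * (Vinf V + 4)) (- (1 / 4))))
    by exact (zseq_l1_cvg V C M HC HV HM Hs).
  destruct (Green_bounded V C M HC HV HM Hs) as [B HB].
  split; [|split; [|split; [|split; [|split; [|split; [|split; [|split]]]]]]].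
  - apply summable_ex_series. apply (S_increments_summable V C M); auto.
  - split; [apply l1_cvg_lim; exact (V_l1_cvg V Hs)|].
    split; [lra|]. exists (Cz_prod V). split; [apply l1_cvg_lim|]; auto; lra.
  - apply (zseq_mul_S V C M); auto.
  - apply summable_ex_series. refine (summable_ext _ _ _ (proj2 (l1_cvg_S _ _) Hz)).
    intro m. rewrite Nat.add_1_r. reflexivity.
  - apply l1_cvg_lim. apply (Vtilde_l1_cvg V C M); auto.
  - exists B. auto.
  - exists B. intros n _. specialize (HB n n). rewrite Nat.min_id, Nat.max_id in HB. exact HB.
  - apply summable_ex_series. apply (Vtilde_sub_V_summable V C M); auto.
  - apply (recessive_solution V C M); auto.
Qed.
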